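(* Among the grid graphs $P_m \Box P_n$ with $2 \leq m \leq n$, the only diametrical one is $P_2 \Box P_2$.
   Context: $P_k$ is the path on $k$ vertices and $\Box$ the Cartesian product of graphs. Let $G=(V,E)$ be a finite connected graph with distance $d(u,v)$, eccentricity $e(v)=\max_w d(v,w)$ and diameter $\mathrm{diam}(G)=\max_v e(v)$. A broadcast is a function $f: V\to\{0,\dots,\mathrm{diam}(G)\}$ with $f(v)\le e(v)$; its cost is $\sum_v f(v)$; it is dominating if every $u$ has some $v$ with $f(v)\ge 1$ and $d(u,v)\le f(v)$; a dominating broadcast is minimal if decreasing $f(v)$ for any $v$ with $f(v)>0$ destroys domination. $\Gamma_b(G)$ is the maximum cost of a minimal dominating broadcast, and $G$ is called diametrical if $\Gamma_b(G)=\mathrm{diam}(G)$. *)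

From mathcomp Require Import all_boot.
Set Implicit Arguments. Unset Strict Implicit. Unset Printing Implicit Defensive.

Section Graphs.
Variables (T : finType) (e : rel T).

Fixpoint ball (k : nat) (u : T) : {set T} :=
  match k with
  | 0 => [set u]
  | k'.+1 => ball k' u :|: [set y | [exists x in ball k' u, e x y]]
  end.

(* graph distance: least k with v in ball k u (distances in a connected
   graph on #|T| vertices are < #|T|; value #|T| if unreachable) *)
Definition dist (u v : T) : nat := find (fun k => v \in ball k u) (iota 0 #|T|).

Definition ecc (v : T) : nat := \max_(w : T) dist v w.
Definition diam : nat := \max_(v : T) ecc v.

Definition connected_graph : Prop := forall u v : T, connect e u v.

Definition is_broadcast (f : T -> nat) : bool :=
  [forall v, (f v <= diam) && (f v <= ecc v)].

Definition bcost (f : T -> nat) : nat := \sum_(v : T) f v.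

Definition dominating (f : T -> nat) : bool :=
  [forall u, [exists v, (0 < f v) && (dist u v <= f v)]].

Definition bupd (f : T -> nat) (v : T) (k : nat) : T -> nat :=
  fun w => if w == v then k else f w.

Definition minimal_dominating (f : T -> nat) : bool :=
  is_broadcast f && dominating f &&
  [forall v, [forall k : 'I_diam.+1,
     (0 < f v) && (k < f v) ==> ~~ dominating (bupd f v k)]].

Definition Gamma_b : nat :=
  \max_(f : {ffun T -> 'I_diam.+1} | minimal_dominating (fun v => val (f v)))
     bcost (fun v => val (f v)).

Definition diametrical : Prop := Gamma_b = diam.

End Graphs.

Definition path_rel (k : nat) : rel 'I_k := fun i j => (i.+1 == j) || (j.+1 == i).

Definition cart_rel (A B : finType) (eA : rel A) (eB : rel B) : rel (A * B)%type :=
  fun x y => ((x.1 == y.1) && eB x.2 y.2) || ((x.2 == y.2) && eA x.1 y.1).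

Definition grid (m n : nat) : rel ('I_m * 'I_n)%type :=
  cart_rel (@path_rel m) (@path_rel n).
Arguments grid : clear implicits.
Arguments path_rel : clear implicits.

From mathcomp Require Import all_boot ssrint zify.
From Stdlib Require Import FunctionalExtensionality.
Set Implicit Arguments. Unset Strict Implicit. Unset Printing Implicit Defensive.

(* Graph distance in P_m [] P_n is the Manhattan distance, so the diameter is
   m + n - 2.  Broadcasting with strength n - 1 from the corner (0, 0) and
   m + n - 3 from the corner (m - 1, 0) dominates the grid, and it is minimal:
   on the last row, (0, n - 1) hears only the first corner and (1, n - 1) only
   the second, each at exactly its range.  Its cost m + 2n - 4 exceeds the
   diameter as soon as n >= 3.  On the 4-cycle P_2 [] P_2 a minimal dominating
   broadcast either has a single vertex of strength 2, or has strengths at most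
   1 on at most two vertices, since two antipodal vertices of strength 1 already
   dominate the cycle. *)

Section DistanceCharacterization.
Variables (T : finType) (e : rel T) (d : T -> T -> nat).
Hypothesis d_eq0 : forall u v, (d u v == 0) = (v == u).
Hypothesis d_edge : forall u x y, e x y -> d u y <= (d u x).+1.
Hypothesis d_pred : forall u v, u != v -> exists2 x, e x v & (d u x).+1 = d u v.

Lemma ball_eq k u : ball e k u = [set v | d u v <= k].
Proof.
elim: k => [|k IH] /=; apply/setP => v; rewrite [in RHS]inE.
  by rewrite in_set1 leqn0 d_eq0.
rewrite in_setU IH !inE; apply/idP/idP.
- case/orP => [/leqW //|/existsP [x]].
  by rewrite inE => /andP [dx exv]; rewrite (leq_trans (d_edge u exv)).
- rewrite leq_eqVlt ltnS => /orP [/eqP dv|-> //]; apply/orP; right.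
  have uv : u != v by rewrite eq_sym -d_eq0 dv.
  have [x exv dx] := d_pred uv.
  by apply/existsP; exists x; rewrite inE exv andbT -ltnS dx dv.
Qed.

Lemma find_iota_leq k N : k < N -> find (leq k) (iota 0 N) = k.
Proof.
move=> ltkN; rewrite -(subnKC (ltnW ltkN)) iotaD find_cat size_iota.
have -> : has (leq k) (iota 0 k) = false.
  by apply/hasPn => i; rewrite mem_iota -ltnNge.
by case: (N - k) (ltkN) => [|r]; rewrite ?addn0 //= leqnn addn0.
Qed.

Lemma dist_eq u v : d u v < #|T| -> dist e u v = d u v.
Proof.
move=> lt_d; rewrite /dist -(find_iota_leq lt_d).
by apply: eq_find => k; rewrite ball_eq inE.
Qed.

End DistanceCharacterization.

Definition manhattan m n (u v : 'I_m * 'I_n) : nat := `|u.1 - v.1| + `|u.2 - v.2|.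

Lemma path_rel_pred k (a b : 'I_k) : a != b ->
  exists2 c, path_rel k c b & `|a - c|.+1 = `|a - b|.
Proof.
move=> neq_ab; case: (ltngtP a b) => [ltab|ltba|eq_ab].
- have ltb1 : b.-1 < k by have := ltn_ord b; lia.
  by exists (Ordinal ltb1); rewrite /path_rel /=; [apply/orP; left; apply/eqP|]; lia.
- have ltb1 : b.+1 < k by have := ltn_ord a; lia.
  by exists (Ordinal ltb1); rewrite /path_rel /=; [apply/orP; right; apply/eqP|]; lia.
- by rewrite (val_inj eq_ab) eqxx in neq_ab.
Qed.

Section Grid.
Variables m n : nat.
Implicit Types u v x y : 'I_m * 'I_n.

Lemma manhattan_eq0 u v : (manhattan u v == 0) = (v == u).
Proof.
case: u v => [a b] [c d]; rewrite /manhattan xpair_eqE -!val_eqE /=; lia.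
Qed.

Lemma manhattan_grid_edge u x y : grid m n x y -> manhattan u y <= (manhattan u x).+1.
Proof.
case: u x y => [a b] [c d] [c' d']; rewrite /grid /cart_rel /path_rel /manhattan /=.
rewrite -!val_eqE /=; lia.
Qed.

Lemma manhattan_grid_pred u v : u != v ->
  exists2 x, grid m n x v & (manhattan u x).+1 = manhattan u v.
Proof.
case: u v => [a b] [c d]; rewrite xpair_eqE negb_and /grid /cart_rel /manhattan /=.
case: (eqVneq a c) => [<-|ac] /= bd.
- have [b' pb'd db'] := path_rel_pred bd.
  by exists (a, b'); rewrite /= ?eqxx ?pb'd //; lia.
- have [a' pa'c da'] := path_rel_pred ac.
  by exists (a', d); rewrite /= ?eqxx ?pa'c ?orbT //; lia.
Qed.

Lemma manhattan_le u v : manhattan u v <= m.-1 + n.-1.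
Proof.
case: u v => [a b] [c d]; rewrite /manhattan /=.
have := ltn_ord a; have := ltn_ord b; have := ltn_ord c; have := ltn_ord d; lia.
Qed.

Lemma dist_grid u v : dist (grid m n) u v = manhattan u v.
Proof.
apply: dist_eq; [exact: manhattan_eq0 | exact: manhattan_grid_edge
  | exact: manhattan_grid_pred |].
rewrite card_prod !card_ord (leq_ltn_trans (manhattan_le u v)) //.
case: u => [a b]; have := ltn_ord a; have := ltn_ord b; nia.
Qed.

End Grid.

Lemma diam_grid m n : diam (grid m.+1 n.+1) = m + n.
Proof.
apply/eqP; rewrite eqn_leq; apply/andP; split.
- apply/bigmax_leqP => v _; apply/bigmax_leqP => w _.
  by rewrite dist_grid (manhattan_le v w).
- apply: (bigmax_sup (ord0, ord0)) => //; apply: (bigmax_sup (ord_max, ord_max)) => //.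
  by rewrite dist_grid /manhattan /=; lia.
Qed.

Section Broadcasts.
Variables (T : finType) (e : rel T).
Implicit Types (f : T -> nat) (u v w : T).

Lemma dist_le_diam u v : dist e u v <= diam e.
Proof. by rewrite (leq_trans _ (leq_bigmax u)) // leq_bigmax. Qed.

Lemma minimal_dominating_le_diam f v : minimal_dominating e f -> f v <= diam e.
Proof. by case/andP => /andP [/forallP /(_ v) /andP []]. Qed.

Lemma redundant_not_minimal f w : 0 < f w ->
    (forall u, exists2 v, v != w & (0 < f v) && (dist e u v <= f v)) ->
  ~~ minimal_dominating e f.
Proof.
move=> fw_gt0 cover; apply/negP => /andP [_ /forallP /(_ w) /forallP /(_ ord0)].
rewrite fw_gt0 /= => /negP; apply; apply/forallP => u; apply/existsP.
by have [v vw hear] := cover u; exists v; rewrite /bupd (negbTE vw).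
Qed.

Lemma minimal_dominating_diam f v : minimal_dominating e f ->
  0 < f v -> diam e <= f v -> forall w, w != v -> f w = 0.
Proof.
move=> fmin fv_gt0 diam_le w wv; apply/eqP; rewrite -leqn0 leqNgt; apply/negP => fw_gt0.
move: fmin; apply/negP; apply: (redundant_not_minimal fw_gt0) => u.
exists v; first by rewrite eq_sym.
by rewrite fv_gt0 (leq_trans (dist_le_diam u v)).
Qed.

Lemma minimal_dominating_private f : is_broadcast e f -> dominating e f ->
    (forall v, 0 < f v -> exists2 u, dist e u v = f v &
       forall w, w != v -> 0 < f w -> f w < dist e u w) ->
  minimal_dominating e f.
Proof.
move=> fbc fdom private; rewrite /minimal_dominating fbc fdom /=.
apply/forallP => v; apply/forallP => k; apply/implyP => /andP [fv_gt0 lt_kf].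
have [u duv alone] := private v fv_gt0.
apply/forallPn; exists u; rewrite negb_exists; apply/forallP => w; rewrite /bupd.
case: (eqVneq w v) => [->|wv]; first by rewrite duv [f v <= _]leqNgt lt_kf andbF.
by apply/negP => /andP [fw_gt0]; rewrite leqNgt alone.
Qed.

Lemma bcost_le_Gamma_b f : minimal_dominating e f -> bcost f <= Gamma_b e.
Proof.
move=> fmin; pose F : {ffun T -> 'I_(diam e).+1} := [ffun v => inord (f v)].
have FE : f = (fun v => val (F v)).
  apply: functional_extensionality => v.
  by rewrite ffunE /= inordK // ltnS minimal_dominating_le_diam.
by rewrite FE in fmin *; exact: (leq_bigmax_cond F fmin).
Qed.

Lemma Gamma_b_le B :
  (forall f, minimal_dominating e f -> bcost f <= B) -> Gamma_b e <= B.
Proof. by move=> bound; apply/bigmax_leqP => F; apply: bound. Qed.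

End Broadcasts.

Section CornerBroadcast.
Variables m n : nat.
Local Notation V := ('I_m.+2 * 'I_n.+2)%type.
Local Notation c0 := ((ord0, ord0) : V).
Local Notation c1 := ((ord_max, ord0) : V).

Definition corner_broadcast (v : V) : nat :=
  if v == c0 then n.+1 else if v == c1 then m + n.+1 else 0.

Variant corner_broadcast_spec (v : V) : nat -> Prop :=
  | CornerBroadcast0 of v = c0 : corner_broadcast_spec v n.+1
  | CornerBroadcast1 of v = c1 : corner_broadcast_spec v (m + n.+1)
  | CornerBroadcastOther : corner_broadcast_spec v 0.

Lemma corner_broadcastP v : corner_broadcast_spec v (corner_broadcast v).
Proof.
rewrite /corner_broadcast.
by case: eqP => [->|_]; [|case: eqP => [->|_]]; constructor.
Qed.

Lemma corner_broadcast_c0 : corner_broadcast c0 = n.+1.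
Proof. by rewrite /corner_broadcast eqxx. Qed.

Lemma corner_broadcast_c1 : corner_broadcast c1 = m + n.+1.
Proof. by rewrite /corner_broadcast /= eqxx. Qed.

Lemma corner_broadcast_dominating : dominating (grid m.+2 n.+2) corner_broadcast.
Proof.
apply/forallP => -[i j]; apply/existsP.
have [le_ij|lt_ij] := leqP (i + j) n.+1.
  by exists c0; rewrite corner_broadcast_c0 dist_grid /manhattan /=; lia.
exists c1; rewrite corner_broadcast_c1 dist_grid /manhattan /=.
by have := ltn_ord i; have := ltn_ord j; lia.
Qed.

Lemma corner_broadcast_minimal :
  minimal_dominating (grid m.+2 n.+2) corner_broadcast.
Proof.
apply: minimal_dominating_private corner_broadcast_dominating _.
- apply/forallP => v; rewrite diam_grid.
  case: corner_broadcastP => [->|->|] //=; apply/andP; split; try lia;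
    by apply: leq_trans (leq_bigmax (ord0, ord_max)); rewrite dist_grid /manhattan /=; lia.
- move=> v; case: corner_broadcastP => [->|->|] // _.
  + exists (ord0, ord_max); first by rewrite dist_grid /manhattan /=; lia.
    move=> w; case: corner_broadcastP => [->|->|] //.
    by rewrite dist_grid /manhattan /=; lia.
  + have one : (inord 1 : 'I_m.+2) = 1 :> nat by rewrite inordK.
    exists (inord 1, ord_max); first by rewrite dist_grid /manhattan /= one; lia.
    move=> w; case: corner_broadcastP => [->|->|] //; last by rewrite eqxx.
    by rewrite dist_grid /manhattan /= one; lia.
Qed.

Lemma bcost_corner_broadcast : bcost corner_broadcast = m + n.*2 + 2.
Proof.
have c1_neq_c0 : c1 != c0 by rewrite xpair_eqE andbT -val_eqE.
rewrite /bcost (bigD1 c0) // (bigD1 c1) //= corner_broadcast_c0 corner_broadcast_c1.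
rewrite big1 => [|v /andP [v_c1 v_c0]]; first lia.
by case: corner_broadcastP v_c1 v_c0 => [->|->|]; rewrite ?eqxx.
Qed.

End CornerBroadcast.

Lemma Gamma_b_grid_ge m n : diam (grid m.+2 n.+2) + n <= Gamma_b (grid m.+2 n.+2).
Proof.
rewrite diam_grid (_ : _ + n = m + n.*2 + 2); last lia.
by rewrite -bcost_corner_broadcast bcost_le_Gamma_b ?corner_broadcast_minimal.
Qed.

Lemma grid22_antipodal_cover (p q u : 'I_2 * 'I_2) :
  p.1 != q.1 -> p.2 != q.2 -> (manhattan u p <= 1) || (manhattan u q <= 1).
Proof.
case: p q u => [a b] [c d] [x y]; rewrite -!val_eqE /manhattan /=.
have := ltn_ord a; have := ltn_ord b; have := ltn_ord c; have := ltn_ord d.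
have := ltn_ord x; have := ltn_ord y; lia.
Qed.

Lemma bcost_grid22_le f : minimal_dominating (grid 2 2) f -> bcost f <= 2.
Proof.
move=> fmin; have diam2 : diam (grid 2 2) = 2 := diam_grid 1 1.
case: (boolP [exists v, 1 < f v]) => [/existsP [v fv_gt1]|/existsPn f_le1].
  have others0 : forall w, w != v -> f w = 0.
    by apply: minimal_dominating_diam fmin (ltnW fv_gt1) _; rewrite diam2.
  rewrite /bcost (bigD1 v) //= big1 ?addn0 => [|w /others0 //].
  by rewrite -diam2 minimal_dominating_le_diam.
have {}f_le1 v : f v <= 1 by rewrite leqNgt f_le1.
have no_three p q w : p.1 != q.1 -> p.2 != q.2 -> w != p -> w != q ->
    f p + f q + f w <= 2.
  move=> p1q1 p2q2 wp wq; rewrite leqNgt; apply/negP => sum3.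
  have [fp_gt0 fq_gt0 fw_gt0] : [/\ 0 < f p, 0 < f q & 0 < f w].
    by have := f_le1 p; have := f_le1 q; have := f_le1 w; split; lia.
  move: fmin; apply/negP; apply: (redundant_not_minimal fw_gt0) => u.
  case/orP: (grid22_antipodal_cover u p1q1 p2q2) => [up|uq].
  + by exists p; rewrite 1?eq_sym // fp_gt0 dist_grid (leq_trans up).
  + by exists q; rewrite 1?eq_sym // fq_gt0 dist_grid (leq_trans uq).
have -> : bcost f = \sum_(i < 2) \sum_(j < 2) f (i, j).
  by rewrite /bcost pair_big /=; apply: eq_bigr => -[i j].
rewrite !big_ord_recl !big_ord0 (_ : lift ord0 ord0 = ord_max); last exact: val_inj.
have := no_three (ord0, ord0) (ord_max, ord_max) (ord0, ord_max) isT isT isT isT.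
have := no_three (ord0, ord0) (ord_max, ord_max) (ord_max, ord0) isT isT isT isT.
have := no_three (ord0, ord_max) (ord_max, ord0) (ord0, ord0) isT isT isT isT.
have := no_three (ord0, ord_max) (ord_max, ord0) (ord_max, ord_max) isT isT isT isT.
lia.
Qed.

Theorem mainTheorem14 (m n : nat) :
  2 <= m -> m <= n ->
  (diametrical (grid m n) <-> (m = 2 /\ n = 2)).
Proof.
case: m n => [|[|m]] [|[|n]] // _ le_mn; rewrite /diametrical; split.
- by move=> Gamma_b_diam; have := Gamma_b_grid_ge m n; rewrite Gamma_b_diam; lia.
- case=> -> ->; have diam22 : diam (grid 2 2) = 2 := diam_grid 1 1.
  apply/eqP; rewrite diam22 eqn_leq (Gamma_b_le bcost_grid22_le) /=.
  by have := Gamma_b_grid_ge 0 0; rewrite diam22.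
Qed.
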